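(* Let $F$ be a contravariant functor from the category of unital $C^*$-algebras to the category of sets whose restriction to the full subcategory of commutative unital $C^*$-algebras is isomorphic to $\operatorname{Gelf}$. Then for every unital $C^*$-algebra $A$ and every integer $n\geq 3$, $F(\mathrm{M}_n(A))=\varnothing$.
   Context: Morphisms of unital $C^*$-algebras are identity-preserving $*$-homomorphisms. $\operatorname{Gelf}(A)$ is the set of maximal ideals of a commutative unital $C^*$-algebra $A$, with a morphism $f$ sent to $M\mapsto f^{-1}(M)$. $\mathrm{M}_n(A)$ is the $C^*$-algebra of $n\times n$ matrices over $A$. *)

From HB Require Import structures.
From mathcomp Require Import all_boot all_order all_algebra complex.
From mathcomp Require Import reals Rstruct.
Set Implicit Arguments. Unset Strict Implicit. Unset Printing Implicit Defensive.
Import Order.TTheory GRing.Theory Num.Theory.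
Local Open Scope ring_scope.

Notation RR := Rdefinitions.R.
Definition CC : numClosedFieldType := RR[i].

Definition cabs (c : CC) : RR := ComplexField.Normc.normc c.

Definition complete_norm (V : zmodType) (nrm : V -> RR) : Prop :=
  forall u : nat -> V,
    (forall e : RR, 0 < e -> exists N : nat, forall m n : nat,
        (N <= m)%N -> (N <= n)%N -> nrm (u m - u n) < e) ->
    exists l : V, forall e : RR, 0 < e -> exists N : nat, forall n : nat,
        (N <= n)%N -> nrm (u n - l) < e.

Record CStarAlg := {
  cs_car :> algType CC;
  cs_star : cs_car -> cs_car;
  cs_norm : cs_car -> RR;
  cs_starD : forall x y, cs_star (x + y) = cs_star x + cs_star y;
  cs_starZ : forall (c : CC) x, cs_star (c *: x) = Num.conj c *: cs_star x;
  cs_starM : forall x y, cs_star (x * y) = cs_star y * cs_star x;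
  cs_starK : forall x, cs_star (cs_star x) = x;
  cs_norm_ge0 : forall x, 0 <= cs_norm x;
  cs_norm_eq0 : forall x, cs_norm x = 0 -> x = 0;
  cs_normD : forall x y, cs_norm (x + y) <= cs_norm x + cs_norm y;
  cs_normZ : forall (c : CC) x, cs_norm (c *: x) = cabs c * cs_norm x;
  cs_normM : forall x y, cs_norm (x * y) <= cs_norm x * cs_norm y;
  cs_cstar : forall x, cs_norm (cs_star x * x) = cs_norm x ^+ 2;
  cs_complete : complete_norm cs_norm
}.

Definition is_unital_star_hom (A B : CStarAlg) (f : A -> B) : Prop :=
  [/\ forall x y, f (x + y) = f x + f y,
      forall (c : CC) x, f (c *: x) = c *: f x,
      forall x y, f (x * y) = f x * f y,
      f 1 = 1 &
      forall x, f (cs_star x) = cs_star (f x)].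

Definition Hom (A B : CStarAlg) := {f : A -> B | is_unital_star_hom f}.

(** Functoriality is stated extensionally: any morphism acting as the identity
    is sent to the identity, and any morphism h acting as g \o f is sent to
    F f \o F g. *)
Record CoFunctor := {
  Fobj : CStarAlg -> Type;
  Fmor : forall A B : CStarAlg, Hom A B -> Fobj B -> Fobj A;
  Fmor_id : forall (A : CStarAlg) (f : Hom A A),
      (forall x, sval f x = x) -> forall y, Fmor f y = y;
  Fmor_comp : forall (A B C : CStarAlg) (f : Hom A B) (g : Hom B C) (h : Hom A C),
      (forall x, sval h x = sval g (sval f x)) ->
      forall z, Fmor h z = Fmor f (Fmor g z)
}.

Definition commutative_cstar (A : CStarAlg) : Prop := forall x y : A, x * y = y * x.

Definition proper_ideal (A : CStarAlg) (I : A -> Prop) : Prop :=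
  [/\ I 0,
      forall x y, I x -> I y -> I (x + y),
      forall a x, I x -> I (a * x),
      forall a x, I x -> I (x * a) &
      ~ I 1].

Definition maximal_ideal (A : CStarAlg) (M : A -> Prop) : Prop :=
  proper_ideal M /\
  forall J : A -> Prop, proper_ideal J -> (forall x, M x -> J x) ->
    forall x, J x -> M x.

Definition Gelf (A : CStarAlg) := {M : A -> Prop | maximal_ideal M}.

(** The restriction of F to commutative unital C*-algebras is naturally
    isomorphic to Gelf, whose action on a morphism f is M |-> f^{-1}(M). *)
Definition restr_iso_Gelf (F : CoFunctor) : Prop :=
  exists eta : forall A : CStarAlg, commutative_cstar A -> Fobj F A -> Gelf A,
    (forall A (hA : commutative_cstar A), bijective (eta A hA)) /\
    (forall (A B : CStarAlg) (hA : commutative_cstar A) (hB : commutative_cstar B)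
            (f : Hom A B) (y : Fobj F B),
        sval (eta A hA (@Fmor F A B f y)) = (fun a => sval (eta B hB y) (sval f a))).

Definition mx_star (A : CStarAlg) (n : nat) (X : 'M[A]_n) : 'M[A]_n :=
  \matrix_(i, j) cs_star (X j i).

(** B is (a C*-algebra) isomorphic, as a unital *-algebra, to M_n(A)
    (i.e. B is M_n(A) equipped with its unique C*-norm). *)
Definition is_Mn (A : CStarAlg) (n : nat) (B : CStarAlg) : Prop :=
  exists phi : 'M[A]_n -> B,
    bijective phi /\
    [/\ forall X Y, phi (X + Y) = phi X + phi Y,
        forall (c : CC) X, phi (map_mx (fun a : A => c *: a) X) = c *: phi X,
        forall X Y, phi (X *m Y) = phi X * phi Y,
        phi 1%:M = 1 &
        forall X, phi (mx_star X) = cs_star (phi X)].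

From Stdlib Require Import Reals.
From mathcomp Require Import all_boot all_order all_algebra complex.
From mathcomp Require Import reals Rstruct boolp ring perm.
(* Imported last so that [Hom] denotes the morphisms of [Defs], not [vector]'s. *)
From Pilot Require Import Defs.
Set Implicit Arguments. Unset Strict Implicit. Unset Printing Implicit Defensive.
Import Order.TTheory GRing.Theory Num.Theory.
Local Open Scope ring_scope.

(* A point y of F(B) turns every decomposition 1 = p + q + r of the unit of B
   into orthogonal projections into a maximal ideal of C^3: pull y back along
   the *-homomorphism C^3 -> B mapping the standard idempotents to p, q, r and
   read it in Gelf(C^3).  Such an ideal omits exactly one idempotent, and
   naturality with respect to the maps C^3 -> C^3 that permute or merge
   coordinates shows that whether p is the omitted one does not depend on q
   and r.  Hence y yields a valuation: a {0,1}-valued function on projections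
   taking the value 1 on exactly one member of each such triple.
   In M_n(A), n >= 3, the diagonal matrix units sum to 1, so one of them, E_jj,
   has value 1.  In a 3 x 3 corner through j the complement of the corner then
   has value 0, so the valuation restricted to the rank-one projections of the
   corner onto integer vectors is a Kochen-Specker colouring of the 51 vectors
   below, which has none. *)

(** * The commutative C*-algebra C^3 *)

Lemma complete_normr : complete_norm (fun x : RR => `|x|).
Proof.
move=> u u_cauchy.
have [l u_cvg] : {l | Un_cv u l}.
  apply: R_complete => e /RltP /u_cauchy [N HN].
  by exists N => m n /ssrnat.leP hm /ssrnat.leP hn; apply/RltP/HN.
exists l => e /RltP /u_cvg [N HN].
by exists N => n /ssrnat.leP hn; apply/RltP/HN.
Qed.

Lemma cabs_ge0 (z : CC) : 0 <= cabs z.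
Proof. by case: z => a b; rewrite /cabs sqrtr_ge0. Qed.

Lemma cabs_conj (z : CC) : cabs (Num.conj z) = cabs z.
Proof. by case: z => a b; rewrite /cabs /= sqrrN. Qed.

Lemma normr_Re_le_cabs (z : CC) : `|complex.Re z| <= cabs z.
Proof. by case: z => a b; rewrite /cabs /= -sqrtr_sqr ler_wsqrtr // lerDl sqr_ge0. Qed.

Lemma normr_Im_le_cabs (z : CC) : `|complex.Im z| <= cabs z.
Proof. by case: z => a b; rewrite /cabs /= -sqrtr_sqr ler_wsqrtr // lerDr sqr_ge0. Qed.

Lemma cabs_le_Re_Im (z : CC) : cabs z <= `|complex.Re z| + `|complex.Im z|.
Proof.
case: z => a b; rewrite /cabs /= -[X in _ <= X]ger0_norm ?addr_ge0 //.
rewrite -sqrtr_sqr ler_wsqrtr // sqrrD !real_normK ?num_real //.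
by rewrite lerD2r lerDl mulrn_wge0 // mulr_ge0.
Qed.

Lemma complete_cabs : complete_norm cabs.
Proof.
have ReB (x y : CC) : complex.Re (x - y) = complex.Re x - complex.Re y by case: x; case: y.
have ImB (x y : CC) : complex.Im (x - y) = complex.Im x - complex.Im y by case: x; case: y.
move=> u u_cauchy.
have [a Re_cvg] : exists a, forall e, 0 < e ->
    exists N, forall n, (N <= n)%N -> `|complex.Re (u n) - a| < e.
  apply: complete_normr => e /u_cauchy [N HN]; exists N => m n hm hn.
  by rewrite -ReB (le_lt_trans (normr_Re_le_cabs _) (HN m n hm hn)).
have [b Im_cvg] : exists b, forall e, 0 < e ->
    exists N, forall n, (N <= n)%N -> `|complex.Im (u n) - b| < e.
  apply: complete_normr => e /u_cauchy [N HN]; exists N => m n hm hn.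
  by rewrite -ImB (le_lt_trans (normr_Im_le_cabs _) (HN m n hm hn)).
exists (a +i* b)%C => e e_gt0.
have e2_gt0 : 0 < e / 2 by rewrite divr_gt0.
have [N1 HN1] := Re_cvg _ e2_gt0; have [N2 HN2] := Im_cvg _ e2_gt0.
exists (maxn N1 N2) => n; rewrite geq_max => /andP[n1 n2].
apply: le_lt_trans (cabs_le_Re_Im _) _.
by rewrite ReB ImB (splitr e) ltrD ?HN1 ?HN2.
Qed.

Lemma complete_norm_max (V W : zmodType) (nV : V -> RR) (nW : W -> RR) :
  complete_norm nV -> complete_norm nW ->
  complete_norm (fun x : V * W => Num.max (nV x.1) (nW x.2)).
Proof.
move=> completeV completeW u u_cauchy.
have [a cvg1] : exists a, forall e, 0 < e ->
    exists N, forall n, (N <= n)%N -> nV ((u n).1 - a) < e.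
  apply: completeV => e /u_cauchy [N HN]; exists N => m n hm hn.
  by have := HN m n hm hn; rewrite gt_max => /andP[].
have [b cvg2] : exists b, forall e, 0 < e ->
    exists N, forall n, (N <= n)%N -> nW ((u n).2 - b) < e.
  apply: completeW => e /u_cauchy [N HN]; exists N => m n hm hn.
  by have := HN m n hm hn; rewrite gt_max => /andP[].
exists (a, b) => e e_gt0.
have [N1 HN1] := cvg1 _ e_gt0; have [N2 HN2] := cvg2 _ e_gt0.
exists (maxn N1 N2) => n; rewrite geq_max => /andP[n1 n2].
by rewrite gt_max HN1 ?HN2.
Qed.

Definition complex_cstar : CStarAlg.
Proof.
refine (@Build_CStarAlg (CC^o : algType CC) (fun x => Num.conj (x : CC)) cabs
  _ _ _ _ cabs_ge0 (@ComplexField.Normc.eq0_normc _) (@le_normcD _) _ _ _ complete_cabs).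
- by move=> x y; rewrite rmorphD.
- by move=> c x; rewrite [in LHS]/GRing.scale /= rmorphM.
- by move=> x y; rewrite /= rmorphM mulrC.
- exact: conjCK.
- by move=> c x; rewrite /cabs -ComplexField.Normc.normcM.
- by move=> x y; rewrite /cabs ComplexField.Normc.normcM.
- by move=> x; rewrite /cabs ComplexField.Normc.normcM -/(cabs _) cabs_conj expr2.
Defined.

Lemma maxr_sqr (R : realDomainType) (a b : R) : 0 <= a -> 0 <= b ->
  Num.max (a ^+ 2) (b ^+ 2) = Num.max a b ^+ 2.
Proof. by move=> a_ge0 b_ge0; rewrite !maxEle ler_pXn2r ?nnegrE //; case: ifP. Qed.

Section ProdCStar.
Variables A B : CStarAlg.

Let prod_star (x : A * B) : A * B := (cs_star x.1, cs_star x.2).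
Let prod_norm (x : A * B) : RR := Num.max (cs_norm x.1) (cs_norm x.2).

Definition prod_cstar : CStarAlg.
Proof.
refine (@Build_CStarAlg ((A * B)%type : algType CC) prod_star prod_norm
  _ _ _ _ _ _ _ _ _ _ (complete_norm_max (@cs_complete A) (@cs_complete B))).
- by move=> x y; rewrite /prod_star /= !cs_starD.
- by move=> c x; rewrite /prod_star /= !cs_starZ.
- by move=> x y; rewrite /prod_star /= !cs_starM.
- by move=> [x1 x2]; rewrite /prod_star /= !cs_starK.
- by move=> x; rewrite /prod_norm le_max cs_norm_ge0.
- have norm_le0 (C : CStarAlg) (z : C) : cs_norm z <= 0 -> z = 0.
    by move=> h; apply/cs_norm_eq0/le_anti; rewrite h cs_norm_ge0.
  move=> [x1 x2] /eqP; rewrite /prod_norm /= eq_le ge_max => /andP[/andP[h1 h2] _].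
  by rewrite (norm_le0 _ _ h1) (norm_le0 _ _ h2).
- move=> x y; rewrite /prod_norm ge_max.
  by apply/andP; split; apply: le_trans (cs_normD _ _) _;
    rewrite lerD // le_max lexx ?orbT.
- by move=> c x; rewrite /prod_norm /= !cs_normZ maxr_pMr ?cabs_ge0.
- move=> x y; rewrite /prod_norm ge_max.
  by apply/andP; split; apply: le_trans (cs_normM _ _) _;
    rewrite ler_pM ?cs_norm_ge0 // le_max lexx ?orbT.
- by move=> x; rewrite /prod_norm /= !cs_cstar maxr_sqr ?cs_norm_ge0.
Defined.
End ProdCStar.

Definition C3 : CStarAlg :=
  prod_cstar complex_cstar (prod_cstar complex_cstar complex_cstar).

Lemma C3_comm : commutative_cstar C3.
Proof.
by move=> [a [b c]] [a' [b' c']]; congr (_, (_, _)); apply: (@mulrC CC).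
Qed.
(** * Projections and valuations *)

Section Projections.
Variable B : CStarAlg.
Implicit Types p q r x : B.

Lemma cs_starN x : cs_star (- x) = - cs_star x.
Proof. by rewrite -scaleN1r cs_starZ rmorphN1 scaleN1r. Qed.

Lemma cs_starB x y : cs_star (x - y) = cs_star x - cs_star y.
Proof. by rewrite cs_starD cs_starN. Qed.

Lemma cs_star0 : cs_star (0 : B) = 0.
Proof. by apply: (addrI (cs_star 0)); rewrite -cs_starD !addr0. Qed.

Lemma cs_star_sum (I : Type) (r : seq I) (P : pred I) (F : I -> B) :
  cs_star (\sum_(i <- r | P i) F i) = \sum_(i <- r | P i) cs_star (F i).
Proof. exact: (big_morph _ (@cs_starD B) cs_star0). Qed.

Lemma cs_star1 : cs_star (1 : B) = 1.
Proof. by rewrite -[LHS]mulr1 -[X in _ * X](cs_starK 1) -cs_starM mulr1 cs_starK. Qed.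

Definition is_proj p := p * p = p /\ cs_star p = p.

Lemma proj_orthC p q : is_proj p -> is_proj q -> p * q = 0 -> q * p = 0.
Proof. by move=> [_ sp] [_ sq] pq; rewrite -sp -sq -cs_starM pq cs_star0. Qed.

Lemma is_proj1 : is_proj 1.
Proof. by rewrite /is_proj mulr1 cs_star1. Qed.

Lemma is_projD p q : is_proj p -> is_proj q -> p * q = 0 -> is_proj (p + q).
Proof.
move=> [pp sp] [qq sq] pq; have qp := proj_orthC (conj pp sp) (conj qq sq) pq.
by split; [rewrite mulrDl !mulrDr pp qq pq qp addr0 add0r | rewrite cs_starD sp sq].
Qed.

Lemma is_proj_compl p : is_proj p -> is_proj (1 - p).
Proof.
move=> [pp sp]; split; last by rewrite cs_starB cs_star1 sp.
by rewrite mulrBr mulr1 mulrBl mul1r pp subrr subr0.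
Qed.

Lemma proj_mul_compl p : is_proj p -> p * (1 - p) = 0.
Proof. by move=> [pp _]; rewrite mulrBr mulr1 pp subrr. Qed.

Lemma is_proj_sum m (P : 'I_m -> B) :
  (forall i, is_proj (P i)) -> (forall i j, i != j -> P i * P j = 0) ->
  is_proj (\sum_i P i).
Proof.
move=> PP orthP; split; last by rewrite cs_star_sum; apply: eq_bigr => i _; case: (PP i).
rewrite mulr_suml; apply: eq_bigr => i _; rewrite mulr_sumr (bigD1 i) //= big1.
  by rewrite addr0; case: (PP i).
by move=> j ji; apply: orthP; rewrite eq_sym.
Qed.

Record proj_partition3 p q r : Prop := ProjPartition3 {
  pp3_proj1 : is_proj p; pp3_proj2 : is_proj q; pp3_proj3 : is_proj r;
  pp3_orth12 : p * q = 0; pp3_orth13 : p * r = 0; pp3_orth23 : q * r = 0;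
  pp3_sum : p + q + r = 1 }.

Lemma proj_partition3_compl p q : is_proj p -> is_proj q -> p * q = 0 ->
  proj_partition3 p q (1 - (p + q)).
Proof.
move=> Pp Pq pq; have Ppq := is_projD Pp Pq pq.
have pr : p * (1 - (p + q)) = 0.
  by rewrite mulrBr mulr1 mulrDr Pp.1 pq addr0 subrr.
have qr : q * (1 - (p + q)) = 0.
  by rewrite mulrBr mulr1 mulrDr Pq.1 (proj_orthC Pp Pq pq) add0r subrr.
by split=> //; [exact: is_proj_compl | rewrite addrC subrK].
Qed.

Lemma proj_partition3E p q r :
  proj_partition3 p q r <-> [/\ is_proj p, is_proj q, p * q = 0 & r = 1 - (p + q)].
Proof.
split=> [[Pp Pq _ pq _ _ <-] | [Pp Pq pq ->]]; last exact: proj_partition3_compl.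
by split=> //; rewrite addrC addKr.
Qed.

Lemma proj_partition3_compl1 p : is_proj p -> proj_partition3 p (1 - p) 0.
Proof.
move=> Pp; apply/proj_partition3E; split=> //; first exact: is_proj_compl.
  exact: proj_mul_compl.
by rewrite (addrC p) subrK subrr.
Qed.

Lemma proj_partition3_213 p q r : proj_partition3 p q r -> proj_partition3 q p r.
Proof.
move=> /proj_partition3E[Pp Pq pq ->].
by apply/proj_partition3E; split; [| | exact: proj_orthC | rewrite (addrC q)].
Qed.

Lemma proj_partition3_321 p q r : proj_partition3 p q r -> proj_partition3 r q p.
Proof.
case=> Pp Pq Pr pq pr qr sum_pqr; apply/proj_partition3E.
by split; [| | exact: proj_orthC | rewrite -sum_pqr (addrAC p) -(addrA p) addrK].
Qed.

End Projections.

Definition exactly_one3 (a b c : bool) : bool :=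
  [&& a || b || c, ~~ (a && b), ~~ (a && c) & ~~ (b && c)].

Definition valuation (B : CStarAlg) (v : B -> bool) : Prop :=
  forall p q r, proj_partition3 p q r -> exactly_one3 (v p) (v q) (v r).

Section Valuation.
Variables (B : CStarAlg) (v : B -> bool).
Hypothesis v_val : valuation v.
Implicit Types p q r : B.

Lemma valuation_orthF p q : is_proj p -> is_proj q -> p * q = 0 -> v p -> v q = false.
Proof.
move=> Pp Pq pq vp; have := v_val (proj_partition3_compl Pp Pq pq).
by rewrite /exactly_one3 vp; case: (v q).
Qed.

Lemma valuation1 : v 1.
Proof.
have /v_val := proj_partition3_compl1 (@is_proj1 B); rewrite subrr.
by rewrite /exactly_one3; case: (v 1); case: (v 0).
Qed.

Lemma valuation0 : v 0 = false.
Proof.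
have /v_val := proj_partition3_compl1 (@is_proj1 B); rewrite subrr.
by rewrite /exactly_one3 valuation1; case: (v 0).
Qed.

Lemma valuationD p q : is_proj p -> is_proj q -> p * q = 0 ->
  v (p + q) = v p || v q.
Proof.
move=> Pp Pq pq; have Ppq := is_projD Pp Pq pq.
have part_pq := proj_partition3_compl Pp Pq pq.
have /v_val : proj_partition3 (p + q) (1 - (p + q)) 0.
  apply/proj_partition3E; split=> //; first exact: is_proj_compl.
    exact: proj_mul_compl.
  by rewrite (addrC (p + q)) subrK subrr.
move: (v_val part_pq); rewrite /exactly_one3 valuation0.
by case: (v p); case: (v q); case: (v (1 - (p + q))); case: (v (p + q)).
Qed.

Lemma valuation_proj3 p q r : is_proj p -> is_proj q -> is_proj r ->
  p * q = 0 -> p * r = 0 -> q * r = 0 -> v (1 - (p + q + r)) = false ->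
  exactly_one3 (v p) (v q) (v r).
Proof.
move=> Pp Pq Pr pq pr qr v_rest; set s := 1 - (p + q + r).
have Ps : is_proj s.
  by apply/is_proj_compl/is_projD; [exact: is_projD | | rewrite mulrDl pr qr addr0].
have rs : r * s = 0.
  rewrite mulrBr mulr1 !mulrDr (proj_orthC Pp Pr pr) (proj_orthC Pq Pr qr).
  by rewrite Pr.1 !add0r subrr.
have rest_rs : r + s = 1 - (p + q) by rewrite addrC /s opprD addrA subrK.
have := v_val (proj_partition3_compl Pp Pq pq).
by rewrite -rest_rs valuationD // v_rest orbF.
Qed.

Lemma valuation_sum_true m (P : 'I_m -> B) :
  (forall i, is_proj (P i)) -> (forall i j, i != j -> P i * P j = 0) ->
  v (\sum_i P i) -> exists i, v (P i).
Proof.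
elim: m P => [|m IHm] P PP orthP; first by rewrite big_ord0 valuation0.
pose w := widen_ord (leqnSn m).
have orth_widen (i j : 'I_m) : i != j -> P (w i) * P (w j) = 0.
  by move=> ij; apply: orthP; apply: contra ij => /eqP[] /val_inj ->.
have orth_max : (\sum_(i < m) P (w i)) * P ord_max = 0.
  rewrite mulr_suml big1 // => i _; apply: orthP.
  by rewrite -val_eqE /= neq_ltn ltn_ord.
have Psum := is_proj_sum (fun i => PP (w i)) orth_widen.
rewrite big_ord_recr /= valuationD //.
by case/orP => [/IHm[] // i vi | vm]; [exists (w i) | exists ord_max].
Qed.

End Valuation.

(** * Valuations from points of F *)

Definition C3_e1 : C3 := (1, (0, 0)).
Definition C3_e2 : C3 := (0, (1, 0)).
Definition C3_e3 : C3 := (0, (0, 1)).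

Lemma maximal_ideal_mul0 (A : CStarAlg) (M : A -> Prop) (u w : A) :
  commutative_cstar A -> maximal_ideal M -> u * w = 0 -> ~ M u -> M w.
Proof.
move=> A_comm [[M0 MD ML MR M1] M_max] uw Mu; apply: contrapT => Mw; apply: Mu.
apply: (M_max (fun x => M (x * w))); rewrite ?uw //.
- split=> [|x x' Mx Mx'|a x Mx|a x Mx|]; rewrite ?mul0r ?mul1r //.
  + by rewrite mulrDl; apply: MD.
  + by rewrite -mulrA; apply: ML.
  + by rewrite (A_comm x) -mulrA; apply: ML.
- by move=> x Mx; apply: MR.
Qed.

Lemma maximal_ideal_C3 (M : C3 -> Prop) : maximal_ideal M ->
  exactly_one3 (~~ `[< M C3_e1 >]) (~~ `[< M C3_e2 >]) (~~ `[< M C3_e3 >]).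
Proof.
move=> M_max; have [[_ MD _ _ M1] _] := M_max.
have orth (u w : C3) : u * w = 0 -> `[< M u >] || `[< M w >].
  move=> uw; case: (asboolP (M u)) => //= Mu.
  exact/asboolP/(maximal_ideal_mul0 C3_comm M_max uw).
have e1e2 : C3_e1 * C3_e2 = 0 by congr (_, (_, _)); rewrite /= ?mulr0 ?mul0r.
have e1e3 : C3_e1 * C3_e3 = 0 by congr (_, (_, _)); rewrite /= ?mulr0 ?mul0r.
have e2e3 : C3_e2 * C3_e3 = 0 by congr (_, (_, _)); rewrite /= ?mulr0 ?mul0r.
have e123 : C3_e1 + C3_e2 + C3_e3 = 1 by congr (_, (_, _)); rewrite /= ?addr0 ?add0r.
apply/and4P; split; try by rewrite negb_and !negbK; apply: orth.
rewrite -!negb_and; apply/negP => /andP[/andP[/asboolP Me1 /asboolP Me2] /asboolP Me3].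
by apply: M1; rewrite -e123; apply: (MD) => //; apply: (MD).
Qed.

Lemma C3_merge23_hom : @is_unital_star_hom C3 C3 (fun x => (x.1, (x.2.1, x.2.1))).
Proof.
by split=> //= [[a [b c]] [a' [b' c']] | k [a [b c]] | [a [b c]] [a' [b' c']] | [a [b c]]].
Qed.

Lemma C3_swap12_hom : @is_unital_star_hom C3 C3 (fun x => (x.2.1, (x.1, x.2.2))).
Proof.
by split=> //= [[a [b c]] [a' [b' c']] | k [a [b c]] | [a [b c]] [a' [b' c']] | [a [b c]]].
Qed.

Lemma C3_swap13_hom : @is_unital_star_hom C3 C3 (fun x => (x.2.2, (x.2.1, x.1))).
Proof.
by split=> //= [[a [b c]] [a' [b' c']] | k [a [b c]] | [a [b c]] [a' [b' c']] | [a [b c]]].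
Qed.

Definition C3_merge23 : Hom C3 C3 := exist _ _ C3_merge23_hom.
Definition C3_swap12 : Hom C3 C3 := exist _ _ C3_swap12_hom.
Definition C3_swap13 : Hom C3 C3 := exist _ _ C3_swap13_hom.

Section PointValuation.
Variables (F : CoFunctor) (B : CStarAlg) (y : Fobj F B).
Variable eta : Fobj F C3 -> Gelf C3.
Hypothesis eta_natural : forall (f : Hom C3 C3) (z : Fobj F C3),
  sval (eta (Fmor f z)) = (fun a => sval (eta z) (sval f a)).
Implicit Types p q r : B.

Definition proj3_map p q r (x : C3) : B := x.1 *: p + x.2.1 *: q + x.2.2 *: r.

Lemma proj3_map_hom p q r : proj_partition3 p q r -> is_unital_star_hom (proj3_map p q r).
Proof.
case=> Pp Pq Pr pq pr qr sum_pqr.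
have qp := proj_orthC Pp Pq pq; have rp := proj_orthC Pp Pr pr.
have rq := proj_orthC Pq Pr qr.
split.
- move=> [a [b c]] [a' [b' c']]; rewrite /proj3_map /= !scalerDl.
  by rewrite [RHS]addrACA; congr (_ + _); rewrite addrACA.
- by move=> k [a [b c]]; rewrite /proj3_map /= !scalerDr !scalerA.
- move=> [a [b c]] [a' [b' c']]; rewrite /proj3_map /=.
  rewrite !mulrDl !mulrDr -!scalerAl -!scalerAr !scalerA Pp.1 Pq.1 Pr.1.
  by rewrite pq qp pr rp qr rq !scaler0 !addr0 !add0r.
- by rewrite /proj3_map /= !scale1r.
- by move=> [a [b c]]; rewrite /proj3_map /= !cs_starD !cs_starZ Pp.2 Pq.2 Pr.2.
Qed.

Definition proj3_hom p q r (H : proj_partition3 p q r) : Hom C3 B :=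
  exist _ _ (proj3_map_hom H).

Definition proj3_ideal p q r (H : proj_partition3 p q r) : C3 -> Prop :=
  sval (eta (Fmor (proj3_hom H) y)).

Lemma proj3_ideal_comp p q r p' q' r' (H : proj_partition3 p q r)
    (H' : proj_partition3 p' q' r') (g : Hom C3 C3) :
  (forall x, proj3_map p' q' r' x = proj3_map p q r (sval g x)) ->
  proj3_ideal H' = (fun a => proj3_ideal H (sval g a)).
Proof.
move=> map_comp; rewrite /proj3_ideal.
by rewrite (@Fmor_comp F C3 C3 B g (proj3_hom H) (proj3_hom H') map_comp) eta_natural.
Qed.

Definition point_val p : bool :=
  `[< exists H : proj_partition3 p (1 - p) 0, ~ proj3_ideal H C3_e1 >].

Lemma point_valE p q r (H : proj_partition3 p q r) :
  point_val p = ~~ `[< proj3_ideal H C3_e1 >].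
Proof.
have H1 := proj_partition3_compl1 (pp3_proj1 H).
have ideal_e1 (H0 : proj_partition3 p (1 - p) 0) :
    proj3_ideal H0 C3_e1 = proj3_ideal H C3_e1.
  rewrite (proj3_ideal_comp H H0 (g := C3_merge23)) // => x.
  have -> : 1 - p = q + r by rewrite -(pp3_sum H) addrAC (addrAC p) subrr add0r.
  by rewrite /proj3_map /= scaler0 addr0 scalerDr addrA.
apply: asbool_equiv_eqP (asboolPn _) _.
by split=> [[H0] | ]; [rewrite ideal_e1 | exists H1; rewrite ideal_e1].
Qed.

Lemma point_val_valuation : valuation point_val.
Proof.
move=> p q r H; rewrite (point_valE H) (point_valE (proj_partition3_213 H)).
rewrite (point_valE (proj_partition3_321 H)).
rewrite (proj3_ideal_comp H (proj_partition3_213 H) (g := C3_swap12)); last first.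
  by move=> x; rewrite /proj3_map /= (addrC (_ *: q)).
rewrite (proj3_ideal_comp H (proj_partition3_321 H) (g := C3_swap13)); last first.
  by move=> x; rewrite /proj3_map /= addrC (addrC (_ *: r)) addrA.
exact: (maximal_ideal_C3 (proj2_sig (eta (Fmor (proj3_hom H) y)))).
Qed.

End PointValuation.

Lemma valuation_of_point (F : CoFunctor) (B : CStarAlg) :
  restr_iso_Gelf F -> Fobj F B -> exists v : B -> bool, valuation v.
Proof.
move=> [eta [_ eta_natural]] y.
exists (point_val y (eta C3 C3_comm)).
by apply: point_val_valuation => f z; apply: eta_natural.
Qed.

(** * Matrix units *)

Definition matrix_units (B : CStarAlg) m (e : 'I_m -> 'I_m -> B) : Prop :=
  (forall i j k l, e i j * e k l = if j == k then e i l else 0) /\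
  (forall i j, cs_star (e i j) = e j i).

Section MatrixUnits.
Variables (B : CStarAlg) (m : nat) (e : 'I_m -> 'I_m -> B).
Hypothesis e_units : matrix_units e.
Let e_mul := proj1 e_units.
Let e_star := proj2 e_units.

Lemma matrix_units_proj i : is_proj (e i i).
Proof. by split; rewrite ?e_mul ?e_star ?eqxx. Qed.

Lemma matrix_units_orth i j : i != j -> e i i * e j j = 0.
Proof. by rewrite e_mul => /negbTE ->. Qed.

Lemma matrix_units_reindex k (f : 'I_k -> 'I_m) :
  injective f -> matrix_units (fun i j => e (f i) (f j)).
Proof. by move=> f_inj; split=> *; rewrite ?e_mul ?e_star ?(inj_eq f_inj). Qed.

End MatrixUnits.

Lemma matrix_units_of_is_Mn (A B : CStarAlg) n : is_Mn A n B ->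
  exists e : 'I_n -> 'I_n -> B, matrix_units e /\ \sum_i e i i = 1.
Proof.
move=> [phi [_ [phiD _ phiM phi1 phi_star]]].
have phi0 : phi 0 = 0 by apply: (addrI (phi 0)); rewrite -phiD !addr0.
exists (fun i j => phi (delta_mx i j)); split; first split.
- by move=> i j k l; rewrite -phiM mul_delta_mx_cond; case: (j == k).
- move=> i j; rewrite -phi_star; congr phi; apply/matrixP => a b; rewrite !mxE.
  by rewrite andbC; case: (_ && _); rewrite ?mulr1n ?mulr0n ?cs_star1 ?cs_star0.
by rewrite -(big_morph phi phiD phi0) -mx1_sum_delta.
Qed.

(** * A Kochen-Specker configuration *)

Definition vec3 := (int * int * int)%type.

Definition vec3_coord (u : vec3) (i : nat) : int :=
  match i with 0 => u.1.1 | 1 => u.1.2 | _ => u.2 end.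

Definition dot3 (u w : vec3) : int := u.1.1 * w.1.1 + u.1.2 * w.1.2 + u.2 * w.2.

Lemma dot3E (u w : vec3) : dot3 u w = \sum_(i < 3) vec3_coord u i * vec3_coord w i.
Proof. by rewrite !big_ord_recr big_ord0 /= add0r. Qed.

(* The last conjunct is the resolution of the identity
   u u^T / |u|^2 + w w^T / |w|^2 + z z^T / |z|^2 = 1, cleared of denominators;
   it holds for every orthogonal frame but is only checked on the frames used. *)
Definition orth_frame3 (u w z : vec3) : bool :=
  let N := dot3 u u * dot3 w w * dot3 z z in
  let resolves i j := dot3 w w * dot3 z z * (vec3_coord u i * vec3_coord u j)
    + dot3 u u * dot3 z z * (vec3_coord w i * vec3_coord w j)
    + dot3 u u * dot3 w w * (vec3_coord z i * vec3_coord z j) == (i == j)%:R * N in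
  [&& [&& dot3 u w == 0, dot3 u z == 0 & dot3 w z == 0],
      [&& dot3 u u != 0, dot3 w w != 0 & dot3 z z != 0] &
      all (fun i => all (resolves i) (iota 0 3)) (iota 0 3)].

Section ExactlyOneColouring.
Variable T : seq (nat * nat * nat).

Definition exactly_one_colouring (c : nat -> bool) : bool :=
  all (fun t => exactly_one3 (c t.1.1) (c t.1.2) (c t.2)) T.

Definition agrees (o : option bool) (b : bool) : bool :=
  if o is Some b' then b == b' else true.

Definition extendable3 (x y z : option bool) : bool :=
  has (fun t => [&& agrees x t.1.1, agrees y t.1.2 & agrees z t.2])
    [:: (true, false, false); (false, true, false); (false, false, true)].

Lemma extendable3_exactly_one x y z a b c :
  agrees x a -> agrees y b -> agrees z c -> exactly_one3 a b c -> extendable3 x y z.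
Proof.
move=> xa yb zc abc; apply/hasP; exists (a, b, c); last exact/and3P.
by move: abc; clear; case: a; case: b; case: c.
Qed.

Definition colour_at (s : seq bool) (i : nat) : option bool :=
  if (i < size s)%N then Some (nth false s i) else None.

Definition locally_extendable (s : seq bool) : bool :=
  all (fun t => extendable3 (colour_at s t.1.1) (colour_at s t.1.2) (colour_at s t.2)) T.

(* Depth-first search through the colourings of [0, size s + k) extending s;
   nested ifs rather than [&&] and [||] keep vm_compute from evaluating both
   branches. *)
Fixpoint colouring_search (k : nat) (s : seq bool) : bool :=
  if locally_extendable s then
    if k is k'.+1 then
      if colouring_search k' (rcons s false) then true
      else colouring_search k' (rcons s true)
    else true
  else false.

Lemma agrees_colour_at (c : nat -> bool) m i : agrees (colour_at (mkseq c m) i) (c i).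
Proof. by rewrite /colour_at size_mkseq; case: ltnP => // lt_im; rewrite nth_mkseq /=. Qed.

Lemma locally_extendable_mkseq (c : nat -> bool) m :
  exactly_one_colouring c -> locally_extendable (mkseq c m).
Proof.
move=> /allP c_col; apply/allP => t /c_col.
by apply: extendable3_exactly_one; apply: agrees_colour_at.
Qed.

Lemma colouring_search_mkseq (c : nat -> bool) :
  exactly_one_colouring c -> forall k m, colouring_search k (mkseq c m).
Proof.
move=> c_col; elim=> [|k IHk] m /=; rewrite locally_extendable_mkseq //.
by have := IHk m.+1; rewrite mkseqS; case: (c m) => ->; rewrite ?if_same.
Qed.

Lemma exactly_one_colouring_search k :
  colouring_search k [::] = false -> forall c, ~~ exactly_one_colouring c.
Proof. by move=> no_sol c; apply: contraFN no_sol => /colouring_search_mkseq /(_ k 0). Qed.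
End ExactlyOneColouring.

(* Indices into [ks_vectors], ordered so that the search below prunes early. *)
Definition ks_triples : seq (nat * nat * nat) :=
  [:: (0, 1, 2); (0, 7, 9); (0, 17, 18); (1, 3, 4); (1, 21, 24); (2, 13, 15);
      (2, 42, 45); (3, 10, 12); (3, 31, 34); (4, 5, 6); (4, 37, 38);
      (5, 7, 8); (5, 26, 27); (5, 42, 43); (6, 13, 14); (6, 17, 19);
      (6, 47, 48); (7, 31, 33); (8, 10, 11); (8, 21, 22); (10, 17, 20);
      (11, 37, 40); (11, 48, 49); (12, 13, 16); (12, 26, 30); (14, 22, 25);
      (14, 33, 36); (18, 27, 28); (18, 38, 39); (19, 21, 23); (19, 31, 32);
      (23, 43, 46); (24, 26, 29); (24, 47, 50); (27, 32, 35); (33, 37, 41);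
      (34, 42, 44)].

Definition ks_vectors : seq vec3 :=
  [:: (1, 1, -1); (0, 1, 1); (2, -1, 1); (0, 1, -1); (1, 0, 0); (0, 0, 1);
      (0, 1, 0); (1, -1, 0); (1, 1, 0); (1, 1, 2); (1, -1, -1); (1, -1, 2);
      (2, 1, 1); (1, 0, -2); (2, 0, 1); (2, 5, 1); (2, -5, 1); (1, 0, 1);
      (1, -2, -1); (1, 0, -1); (1, 2, -1); (1, -1, 1); (1, -1, -2); (1, 2, 1);
      (2, 1, -1); (1, 5, -2); (1, -2, 0); (2, 1, 0); (1, -2, 5); (2, 1, 5);
      (2, 1, -5); (1, 1, 1); (1, -2, 1); (1, 1, -2); (2, -1, -1); (1, -2, -5);
      (1, -5, -2); (0, 2, 1); (0, 1, -2); (5, 2, 1); (5, 1, -2); (5, -1, 2);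
      (1, 2, 0); (2, -1, 0); (2, -1, 5); (2, -1, -5); (1, 2, -5); (1, 0, 2);
      (2, 0, -1); (1, 5, 2); (2, -5, -1)].

Definition ks_vector (k : nat) : vec3 := nth (0, 0, 0) ks_vectors k.

Lemma ks_frames :
  all (fun t => orth_frame3 (ks_vector t.1.1) (ks_vector t.1.2) (ks_vector t.2)) ks_triples.
Proof. by vm_compute. Qed.

Lemma ks_uncolourable c : ~~ exactly_one_colouring ks_triples c.
Proof. by apply: (@exactly_one_colouring_search _ 51); vm_compute. Qed.

(** * Rank-one projections in a 3 x 3 corner *)

Section Corner.
Variables (B : CStarAlg) (e : 'I_3 -> 'I_3 -> B).
Hypothesis e_units : matrix_units e.
Let e_mul := proj1 e_units.
Let e_star := proj2 e_units.

Definition mx_comb (X : 'I_3 -> 'I_3 -> int) : B :=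
  \sum_i \sum_j (X i j)%:~R *: e i j.

Lemma eq_mx_comb X Y : X =2 Y -> mx_comb X = mx_comb Y.
Proof. by move=> eqXY; apply: eq_bigr => i _; apply: eq_bigr => j _; rewrite eqXY. Qed.

Lemma mx_combD X Y : mx_comb (fun i j => X i j + Y i j) = mx_comb X + mx_comb Y.
Proof.
rewrite /mx_comb -big_split; apply: eq_bigr => i _; rewrite -big_split.
by apply: eq_bigr => j _; rewrite rmorphD scalerDl.
Qed.

Lemma mx_combZ (k : int) X : mx_comb (fun i j => k * X i j) = k%:~R *: mx_comb X.
Proof.
rewrite /mx_comb scaler_sumr; apply: eq_bigr => i _; rewrite scaler_sumr.
by apply: eq_bigr => j _; rewrite scalerA rmorphM.
Qed.

Lemma mx_combM X Y :
  mx_comb X * mx_comb Y = mx_comb (fun i l => \sum_j X i j * Y j l).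
Proof.
rewrite /mx_comb mulr_suml; apply: eq_bigr => i _; rewrite mulr_suml.
transitivity (\sum_(j < 3) \sum_(l < 3) ((X i j)%:~R * (Y j l)%:~R : CC) *: e i l).
  apply: eq_bigr => j _; rewrite big_distrr /= (bigD1 j) //= [R in _ + R]big1 ?addr0.
    rewrite big_distrr /=; apply: eq_bigr => l _.
    by rewrite -scalerAl -scalerAr scalerA e_mul eqxx.
  move=> k /negbTE kj; rewrite big_distrr /= big1 // => l _.
  by rewrite -scalerAl -scalerAr e_mul eq_sym kj !scaler0.
rewrite exchange_big; apply: eq_bigr => l _.
by rewrite -scaler_suml rmorph_sum; congr (_ *: _); apply: eq_bigr => j _; rewrite rmorphM.
Qed.

Lemma mx_comb_star X : cs_star (mx_comb X) = mx_comb (fun i j => X j i).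
Proof.
rewrite /mx_comb cs_star_sum exchange_big; apply: eq_bigr => i _; rewrite cs_star_sum.
by apply: eq_bigr => j _; rewrite cs_starZ e_star rmorph_int.
Qed.

Definition corner : B := \sum_i e i i.

Lemma mx_comb_delta : mx_comb (fun i j => (i == j)%:R) = corner.
Proof.
apply: eq_bigr => i _; rewrite (bigD1 i) //= big1 ?addr0 => [|j /negbTE ji].
  by rewrite eqxx scale1r.
by rewrite eq_sym ji scale0r.
Qed.

Lemma is_proj_corner : is_proj corner.
Proof. exact: is_proj_sum (matrix_units_proj e_units) (matrix_units_orth e_units). Qed.

Definition line_proj (u : vec3) : B :=
  ((dot3 u u)%:~R)^-1 *: mx_comb (fun i j => vec3_coord u i * vec3_coord u j).

Lemma line_projM u w : line_proj u * line_proj w =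
  ((dot3 u u)%:~R^-1 * (dot3 w w)%:~R^-1 * (dot3 u w)%:~R)
    *: mx_comb (fun i l => vec3_coord u i * vec3_coord w l).
Proof.
rewrite /line_proj -scalerAl -scalerAr scalerA mx_combM -[in RHS]scalerA -mx_combZ.
congr (_ *: _); apply: eq_mx_comb => i l; rewrite dot3E mulr_suml.
by apply: eq_bigr => j _; ring.
Qed.

Lemma line_proj_orth u w : dot3 u w = 0 -> line_proj u * line_proj w = 0.
Proof. by move=> uw; rewrite line_projM uw mulr0 scale0r. Qed.

Lemma is_proj_line_proj u : dot3 u u != 0 -> is_proj (line_proj u).
Proof.
move=> u_neq0; split.
  by rewrite line_projM -mulrA mulVf ?mulr1 // intr_eq0.
rewrite /line_proj cs_starZ mx_comb_star fmorphV rmorph_int.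
by congr (_ *: _); apply: eq_mx_comb => i j; rewrite mulrC.
Qed.

Lemma line_proj_scale u (c : int) : c != 0 ->
  line_proj u = ((dot3 u u * c)%:~R)^-1
    *: mx_comb (fun i j => c * (vec3_coord u i * vec3_coord u j)).
Proof.
by move=> c_neq0; rewrite mx_combZ scalerA intrM invfM -mulrA mulVf ?mulr1 // intr_eq0.
Qed.

Lemma line_proj_frame u w z : orth_frame3 u w z ->
  line_proj u + line_proj w + line_proj z = corner.
Proof.
case/and3P=> _ /and3P[u_neq0 w_neq0 z_neq0] /allP resolves.
set N := dot3 u u * dot3 w w * dot3 z z.
rewrite (line_proj_scale u (mulf_neq0 w_neq0 z_neq0)) mulrA -/N.
rewrite (line_proj_scale w (mulf_neq0 u_neq0 z_neq0)) (mulrCA (dot3 w w)) mulrA -/N.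
rewrite (line_proj_scale z (mulf_neq0 u_neq0 w_neq0)) (mulrC (dot3 z z)) -/N.
rewrite -!scalerDr -!mx_combD (eq_mx_comb (Y := fun i j => N * (i == j)%:R)).
  by rewrite mx_combZ scalerA mulVf ?intr_eq0 ?mulf_neq0 // scale1r mx_comb_delta.
have iota3 (k : 'I_3) : val k \in iota 0 3 by rewrite mem_iota ltn_ord.
move=> i j; have /allP/(_ j (iota3 j))/eqP-> := resolves i (iota3 i).
by rewrite mulrC.
Qed.

Lemma valuation_frame (v : B -> bool) u w z : valuation v ->
  v (1 - corner) = false -> orth_frame3 u w z ->
  exactly_one3 (v (line_proj u)) (v (line_proj w)) (v (line_proj z)).
Proof.
move=> v_val v_compl frame; have := frame.
case/and3P=> /and3P[/eqP uw /eqP uz /eqP wz] /and3P[u_neq0 w_neq0 z_neq0] _.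
by apply: valuation_proj3; rewrite ?line_proj_orth ?line_proj_frame //;
  apply: is_proj_line_proj.
Qed.

Lemma no_valuation_corner (v : B -> bool) : valuation v -> v (e ord0 ord0) -> False.
Proof.
move=> v_val v00.
have e00_corner : e ord0 ord0 * (1 - corner) = 0.
  rewrite mulrBr mulr1 mulr_sumr (bigD1 ord0) //= big1 ?e_mul ?eqxx ?addr0 ?subrr //.
  by move=> i /negbTE i0; rewrite e_mul eq_sym i0.
have v_compl := valuation_orthF v_val (matrix_units_proj e_units ord0)
  (is_proj_compl is_proj_corner) e00_corner v00.
apply: (negP (ks_uncolourable (fun k => v (line_proj (ks_vector k))))).
by apply/allP => -[[a b] c] /(allP ks_frames) /=; apply: valuation_frame.
Qed.

End Corner.

Theorem corollary5p9 (F : CoFunctor) :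
  restr_iso_Gelf F ->
  forall (A : CStarAlg) (n : nat), (3 <= n)%N ->
  forall B : CStarAlg, is_Mn A n B -> Fobj F B -> False.
Proof.
move=> F_Gelf A n n_ge3 B /matrix_units_of_is_Mn[e [e_units sum_diag]] y.
have [v v_val] := valuation_of_point F_Gelf y.
have [j vj] : exists j, v (e j j).
  apply: (valuation_sum_true v_val (P := fun i => e i i)).
  - exact: matrix_units_proj.
  - exact: matrix_units_orth.
  - by rewrite sum_diag valuation1.
pose idx (i : 'I_3) : 'I_n := tperm (widen_ord n_ge3 ord0) j (widen_ord n_ge3 i).
have idx_inj : injective idx by move=> a b /perm_inj [] /val_inj.
apply: (no_valuation_corner (matrix_units_reindex e_units idx_inj) v_val).
by rewrite /idx tpermL.
Qed.
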